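(* A function $f:\mathbb{N}\to\mathbb{N}$ is obliviously-computable by a leaderless CRN if and only if $f$ is semilinear and superadditive (i.e. $f(x)+f(y)\le f(x+y)$ for all $x,y\in\mathbb{N}$).
   Context: A chemical reaction network (CRN) is a pair $(\mathcal{S},\mathcal{R})$ of a finite set of species and a finite set of reactions $(\vec{R},\vec{P})\in\mathbb{N}^{\mathcal{S}}\times\mathbb{N}^{\mathcal{S}}$. A configuration is $\vec{C}\in\mathbb{N}^{\mathcal{S}}$; a reaction is applicable if $\vec{R}\le\vec{C}$ and yields $\vec{C}-\vec{R}+\vec{P}$; reachability is via finite sequences of applicable reactions. A leaderless CRN computing $f:\mathbb{N}\to\mathbb{N}$ has an input species $X$ and an output species $Y$; the initial configuration for input $x$ has $x$ copies of $X$ and zero of all other species (no leader). $\vec{C}$ is stable if all configurations reachable from it have the same count of $Y$. The CRN stably computes $f$ if for every $x$ and every $\vec{C}$ reachable from the initial configuration, some stable $\vec{O}$ reachable from $\vec{C}$ has $\vec{O}(Y)=f(x)$. It is output-oblivious if $Y$ is never a reactant. $f$ is obliviously-computable by a leaderless CRN if some leaderless output-oblivious CRN stably computes it. A set $S\subseteq\mathbb{N}^d$ is semilinear if it is a finite Boolean combination of threshold sets $\{\vec{x}:\vec{a}\cdot\vec{x}\ge b\}$ and mod sets $\{\vec{x}:\vec{a}\cdot\vec{x}\equiv b\bmod c\}$ ($\vec{a}\in\mathbb{Z}^d,b\in\mathbb{Z},c\in\mathbb{N}_+$); a function is semilinear if it is a finite union of affine partial functions with disjoint semilinear domains. *)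

From Stdlib Require List.
From mathcomp Require Import all_boot all_order all_algebra.
Set Implicit Arguments. Unset Strict Implicit. Unset Printing Implicit Defensive.
Import Order.TTheory GRing.Theory Num.Theory.

Record crn := Crn {
  species : finType;
  reactions : seq ((species -> nat) * (species -> nat))
}.

Definition config (N : crn) := species N -> nat.

Definition step (N : crn) (C C' : config N) : Prop :=
  exists r, List.In r (reactions N) /\
    (forall s, r.1 s <= C s) /\
    (forall s, C' s = C s - r.1 s + r.2 s).

Inductive reach (N : crn) : config N -> config N -> Prop :=
| reach_refl C : reach C C
| reach_step C C' C'' : step C C' -> reach C' C'' -> reach C C''.

Definition init_config (N : crn) (X : species N) (x : nat) : config N :=
  fun s => if s == X then x else 0.

Definition stable (N : crn) (Y : species N) (C : config N) : Prop :=
  forall C', reach C C' -> C' Y = C Y.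

Definition stably_computes (N : crn) (X Y : species N) (f : nat -> nat) : Prop :=
  forall x C, reach (init_config X x) C ->
    exists O, reach C O /\ stable Y O /\ O Y = f x.

Definition output_oblivious (N : crn) (Y : species N) : Prop :=
  forall r, List.In r (reactions N) -> r.1 Y = 0.

Definition obliviously_computable (f : nat -> nat) : Prop :=
  exists (N : crn) (X Y : species N),
    output_oblivious Y /\ stably_computes X Y f.

Local Open Scope ring_scope.

Inductive semilinear_set : (nat -> Prop) -> Prop :=
| sl_thr (a b : int) : semilinear_set (fun x => b <= a * x%:Z)
| sl_mod (a b : int) (c : nat) : (0 < c)%N ->
    semilinear_set (fun x => (a * x%:Z == b %[mod c%:Z])%Z)
| sl_compl A : semilinear_set A -> semilinear_set (fun x => ~ A x)
| sl_inter A B : semilinear_set A -> semilinear_set B ->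
    semilinear_set (fun x => A x /\ B x)
| sl_union A B : semilinear_set A -> semilinear_set B ->
    semilinear_set (fun x => A x \/ B x).

Definition semilinear_fun (f : nat -> nat) : Prop :=
  exists (n : nat) (D : 'I_n -> nat -> Prop) (a b : 'I_n -> rat),
    (forall i, semilinear_set (D i)) /\
    (forall i j x, i != j -> D i x -> D j x -> False) /\
    (forall x, exists i, D i x) /\
    (forall i x, D i x -> (f x)%:R = a i * x%:R + b i).

Definition superadditive (f : nat -> nat) : Prop :=
  forall x y, (f x + f y <= f (x + y))%N.

From mathcomp Require Import all_boot all_order all_algebra.
From mathcomp Require Import zify ring.
From Stdlib Require Import FunctionalExtensionality PropExtensionality ClassicalEpsilon.
From Stdlib Require List.
Set Implicit Arguments. Unset Strict Implicit. Unset Printing Implicit Defensive.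
Import Order.TTheory GRing.Theory Num.Theory.

(* Necessity: running the CRN on x and on y inputs side by side is a run on
   x + y inputs, and Y is never consumed, so f is superadditive.  Stabilizing
   after each new input gives stable configurations O n reachable from n inputs,
   with O (a + d) reachable from O a plus d inputs.  Along a subsequence every
   species count is constant or strictly increasing, so the difference D of two
   consecutive terms can be pumped: O x + k D is reachable from x + k d inputs
   and stable, being dominated by a later O n.  Hence f (x + k d) = f x + k q,
   and superadditivity upgrades this to f (n + d) = f n + q for all large n,
   which makes f semilinear.

   Sufficiency: semilinear sets are eventually periodic, so f is eventually
   affine on each residue class modulo some P, and superadditivity forces a
   common slope: f (n + P) = f n + q for large n.  Such an f is computed by
   species A i recording partial sums of inputs, with reactions
   X -> A 1 + f 1 Y and A i + A j -> A (i + j) + (f (i + j) - f i - f j) Y,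
   where indices past a window are folded back by multiples of P, which costs
   exactly q per period. *)

(** * Configurations and reachability *)

Definition vadd (T : Type) (u v : T -> nat) : T -> nat := fun s => u s + v s.
Definition vscale (T : Type) (k : nat) (u : T -> nat) : T -> nat := fun s => k * u s.

Lemma vaddC (T : Type) (u v : T -> nat) : vadd u v = vadd v u.
Proof. by apply: functional_extensionality => s; rewrite /vadd addnC. Qed.

Lemma vaddA (T : Type) (u v w : T -> nat) : vadd u (vadd v w) = vadd (vadd u v) w.
Proof. by apply: functional_extensionality => s; rewrite /vadd addnA. Qed.

Section Reachability.
Variable N : crn.
Implicit Types (C D E : config N) (X Y : species N).

Lemma reach_trans C1 C2 C3 : reach C1 C2 -> reach C2 C3 -> reach C1 C3.
Proof. by elim=> // A B D AB _ IH /IH; apply: reach_step. Qed.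

Lemma step_vaddr C C' E : step C C' -> step (vadd C E) (vadd C' E).
Proof.
case=> r [r_in [r_le C'_eq]]; exists r; split=> //; split=> s; rewrite /vadd.
  exact: leq_trans (r_le s) (leq_addr _ _).
by rewrite C'_eq; have := r_le s; lia.
Qed.

Lemma step_balance C C' : step C C' -> exists r, [/\ List.In r (reactions N),
  forall s, r.1 s <= C s & forall s, C' s + r.1 s = C s + r.2 s].
Proof. by case=> r [r_in [r_le C'_eq]]; exists r; split=> // s; rewrite C'_eq; have := r_le s; lia. Qed.

Lemma step_fire r C : List.In r (reactions N) -> (forall s, r.1 s <= C s) ->
  exists2 C', step C C' & forall s, C' s + r.1 s = C s + r.2 s.
Proof.
move=> r_in r_le; exists (fun s => C s - r.1 s + r.2 s); first by exists r.
by move=> s; have := r_le s; lia.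
Qed.

Lemma reach_vaddr C C' E : reach C C' -> reach (vadd C E) (vadd C' E).
Proof.
elim=> [A|A B D AB _ IH]; first exact: reach_refl.
exact: reach_step (step_vaddr E AB) IH.
Qed.

Lemma reach_vaddl C C' E : reach C C' -> reach (vadd E C) (vadd E C').
Proof. by rewrite ![vadd E _]vaddC; apply: reach_vaddr. Qed.

Lemma reach_vadd C C' E E' : reach C C' -> reach E E' -> reach (vadd C E) (vadd C' E').
Proof. by move=> /reach_vaddr CC' /reach_vaddl EE'; apply: reach_trans (CC' _) (EE' _). Qed.

Lemma reach_pump C D E k :
  reach (vadd C E) (vadd C D) -> reach (vadd C (vscale k E)) (vadd C (vscale k D)).
Proof.
move=> CED; elim: k => [|k IH].
  have -> : vscale 0 E = vscale 0 D by apply: functional_extensionality => s.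
  exact: reach_refl.
have vscaleS F : vscale k.+1 F = vadd F (vscale k F).
  by apply: functional_extensionality => s; rewrite /vscale /vadd mulSn.
rewrite !vscaleS !vaddA; apply: reach_trans (reach_vaddr _ CED) _.
by rewrite [vadd C D]vaddC -!vaddA; apply: reach_vaddl.
Qed.

Lemma reach_output_mono Y C C' :
  output_oblivious Y -> reach C C' -> C Y <= C' Y.
Proof.
move=> oblY; elim=> // A B D [r [r_in [_ ->]]] _; apply: leq_trans.
by rewrite (oblY _ r_in) subn0 leq_addr.
Qed.

Lemma stable_le Y C E : (forall s, C s <= E s) -> stable Y E -> stable Y C.
Proof.
move=> CE stE C' CC'.
have EC : E = vadd C (fun s => E s - C s).
  by apply: functional_extensionality => s; rewrite /vadd subnKC.
have := reach_vaddr (fun s => E s - C s) CC'; rewrite -EC => /stE.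
by rewrite /vadd; have := CE Y; lia.
Qed.

Lemma stable_of_no_step Y C : (forall C', ~ step C C') -> stable Y C.
Proof. by move=> noC C' CC'; case: CC' noC => // C1 C2 C3 C12 _ /(_ C2). Qed.

Lemma reach_terminal (T : config N -> Prop) (mu : config N -> nat) :
  (forall C, ~ T C -> exists2 C', step C C' & mu C' < mu C) ->
  forall C, exists2 O, reach C O & T O.
Proof.
move=> progress C; have [m] := ubnP (mu C); elim: m C => // m IH C muC.
have [TC|nTC] := classic (T C); first by exists C; [apply: reach_refl|].
have [C' CC' muC'] := progress C nTC.
have [O C'O TO] := IH C' (leq_trans muC' muC).
by exists O; first exact: reach_step CC' C'O.
Qed.

Lemma init_configD X a b :
  init_config X (a + b) = vadd (init_config X a) (init_config X b).
Proof.
by apply: functional_extensionality => s; rewrite /vadd /init_config; case: (s == X).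
Qed.

Lemma init_configM X k a : init_config X (k * a) = vscale k (init_config X a).
Proof.
by apply: functional_extensionality => s; rewrite /vscale /init_config; case: (s == X); rewrite ?muln0.
Qed.

Lemma vadd_init0 X C : vadd C (init_config X 0) = C.
Proof.
by apply: functional_extensionality => s; rewrite /vadd /init_config; case: (s == X); rewrite addn0.
Qed.

End Reachability.

(** * Integer sequences *)

Lemma incr_geq_addl (t : nat -> nat) k : {homo t : m n / m < n} -> t 0 + k <= t k.
Proof.
move=> incr_t; elim: k => [|k IH]; first by rewrite addn0.
by rewrite addnS; apply: leq_ltn_trans IH (incr_t _ _ _).
Qed.

Lemma const_or_incr_subseq (g : nat -> nat) : exists t, {homo t : m n / m < n} /\
  ((forall k, g (t k) = g (t 0)) \/ {homo g \o t : m n / m < n}).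
Proof.
have [[c recurrent_c]|no_recurrent] :=
  classic (exists c, forall M, exists n, M <= n /\ g n = c).
  have [h Hh] := choice _ recurrent_c.
  pose t k := iter k (fun m => h m.+1) (h 0); exists t; split.
    apply: homo_ltn => [y x z|k]; [exact: ltn_trans | by have [] := Hh (t k).+1].
  by left; case=> [|k] //; rewrite /= (proj2 (Hh _)) (proj2 (Hh 0)).
have unbounded B : exists M, forall n, M <= n -> B <= g n.
  elim: B => [|B [M HM]]; first by exists 0.
  have /not_all_ex_not [M' HM'] : ~ forall M, exists n, M <= n /\ g n = B.
    by move=> recurrent_B; apply: no_recurrent; exists B.
  exists (maxn M M') => n; rewrite geq_max => /andP[/HM gnB M'n].
  by rewrite ltn_neqAle gnB andbT; apply/eqP => Bgn; apply: HM'; exists n.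
have [h Hh] := choice _ unbounded.
pose t k := iter k (fun m => maxn m.+1 (h (g m).+1)) 0; exists t; split.
  apply: homo_ltn => [y x z|k]; [exact: ltn_trans | exact: leq_maxl].
right; apply: homo_ltn => [y x z|k]; [exact: ltn_trans | exact/Hh/leq_maxr].
Qed.

Lemma const_or_incr_subseq_fin (S : finType) (v : nat -> S -> nat) :
  exists t, {homo t : m n / m < n} /\ forall s,
    (forall k, v (t k) s = v (t 0) s) \/ {homo (fun k => v (t k) s) : m n / m < n}.
Proof.
suff [t [incr_t Ht]] : exists t, {homo t : m n / m < n} /\ forall s, s \in enum S ->
    (forall k, v (t k) s = v (t 0) s) \/ {homo (fun k => v (t k) s) : m n / m < n}.
  by exists t; split=> // s; apply: Ht; rewrite mem_enum.
elim: (enum S) => [|s0 ss [t [incr_t Ht]]]; first by exists id; split.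
have [u [incr_u Hu]] := const_or_incr_subseq (fun k => v (t k) s0).
exists (t \o u); split; first by move=> m n /incr_u /incr_t.
move=> s.
rewrite inE => /predU1P[->|/Ht[const|incr]]; first exact: Hu.
  by left=> k; rewrite /= const (const (u 0)).
by right=> m n /incr_u /incr.
Qed.

Lemma noninc_eventually_const (u : nat -> nat) :
  (forall k, u k.+1 <= u k) -> exists K, forall k, K <= k -> u k = u K.
Proof.
have [b] := ubnP (u 0); elim: b u => // b IH u u0 dec.
have [const|/not_all_ex_not [k uk]] := classic (forall k, u k = u 0).
  by exists 0 => k _; rewrite !const.
have u_mono : {homo u : m n / m <= n >-> n <= m}.
  by apply: homo_leq => // m n p mn np; apply: leq_trans np mn.
have ukb : u (k + 0) < b.
  by rewrite addn0 -ltnS; apply: leq_trans u0; rewrite ltnS ltn_neqAle (u_mono 0 k) // andbT; apply/eqP.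
have [K HK] : exists K, forall j, K <= j -> u (k + j) = u (k + K).
  by apply: IH ukb _ => j; rewrite addnS.
exists (k + K) => n kKn; rewrite -(HK (n - k)); last by lia.
by rewrite subnKC //; lia.
Qed.

Lemma noninc_eventually_const_family (u : nat -> nat -> nat) d :
  (forall r k, u r k.+1 <= u r k) ->
  exists K, forall r k, r < d -> K <= k -> u r k = u r K.
Proof.
move=> dec; elim: d => [|d [K1 HK1]]; first by exists 0.
have [K2 HK2] := noninc_eventually_const (dec d).
exists (maxn K1 K2) => r k; rewrite ltnS leq_eqVlt geq_max => /predU1P[->|rd] /andP[? ?].
  by rewrite HK2 // [RHS]HK2 // leq_maxr.
by rewrite HK1 // [RHS]HK1 // leq_maxl.
Qed.

(** * Superadditive functions *)

(* That is, f x = (q / P) x + B (x mod P) for large x: f is eventually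
   quilt-affine. *)
Definition eventually_quilt_affine (f : nat -> nat) :=
  exists N P q, 0 < P /\ forall n, N <= n -> f (n + P) = f n + q.

Lemma quilt_affine_iter f N P q : (forall n, N <= n -> f (n + P) = f n + q) ->
  forall k n, N <= n -> f (n + k * P) = f n + k * q.
Proof.
move=> fP; elim=> [|k IH] n Nn; first by rewrite !mul0n !addn0.
have -> : n + k.+1 * P = n + k * P + P by rewrite mulSn; lia.
by rewrite fP ?IH ?mulSn; lia.
Qed.

Lemma affine_slope_leq a b c d : (forall k, a + k * b <= c + k * d) -> b <= d.
Proof. by move/(_ c.+1); rewrite leqNgt; apply: contraNleq => db; nia. Qed.

Section Superadditive.
Variable f : nat -> nat.
Hypothesis sf : superadditive f.

Lemma superadditive0 : f 0 = 0.
Proof. by have := sf 0 0; rewrite addn0; lia. Qed.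

Lemma superadditive_homo : {homo f : m n / m <= n}.
Proof. by move=> m n mn; rewrite -(subnKC mn); apply: leq_trans (sf _ _); rewrite leq_addr. Qed.

Lemma superadditive_mul k n : k * f n <= f (k * n).
Proof.
elim: k => [|k IH]; first by rewrite !mul0n.
by rewrite !mulSn; apply: leq_trans (sf _ _); rewrite leq_add2l.
Qed.

Lemma superadditive_eventually_exact_increment x d q : 0 < d ->
  (forall k, f (x + k * d) = f x + k * q) ->
  (forall m, x <= m -> f m + q <= f (m + d)) ->
  exists N, forall n, N <= n -> f (n + d) = f n + q.
Proof.
move=> d_gt0 f_prog f_incr.
have slope n : d * f n <= n * q.
  apply: (@affine_slope_leq 0 _ (f x)) => k; rewrite add0n.
  rewrite mulnA; apply: leq_trans (superadditive_mul _ n) _.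
  by rewrite mulnA -f_prog; apply: superadditive_homo; rewrite mulnAC leq_addl.
(* The slack along each progression x + r + k d is nonincreasing in k, hence
   eventually constant, and a constant slack means an exact increment. *)
pose u r k := (x + r + k * d) * q - d * f (x + r + k * d).
have u_dec r k : u r k.+1 <= u r k.
  rewrite /u; have -> : x + r + k.+1 * d = x + r + k * d + d by rewrite mulSn; lia.
  set m := x + r + k * d.
  have := f_incr m (leq_trans (leq_addr r x) (leq_addr _ _)).
  have := slope m; have := slope (m + d); nia.
have [K HK] := noninc_eventually_const_family d u_dec.
exists (x + K * d) => n Kn.
have n_eq : n = x + (n - x) %% d + (n - x) %/ d * d.
  by rewrite -addnA [_ %% d + _]addnC -divn_eq subnKC //; lia.
have k_ge : K <= (n - x) %/ d by rewrite leq_divRL //; lia.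
set r := (n - x) %% d in n_eq; set k := (n - x) %/ d in n_eq k_ge.
have r_lt : r < d by rewrite ltn_pmod.
have := HK r k.+1 r_lt (leqW k_ge); rewrite -(HK r k r_lt k_ge) /u -n_eq.
have -> : x + r + k.+1 * d = n + d by rewrite mulSn n_eq; lia.
have := f_incr n (leq_trans (leq_addr _ _) Kn).
have := slope n; have := slope (n + d) => ? ? ? ?.
by apply/eqP; rewrite -(eqn_pmul2l d_gt0); apply/eqP; nia.
Qed.
End Superadditive.

(** * Functions computed obliviously *)

Section ObliviousComputation.
Variables (N : crn) (X Y : species N) (f : nat -> nat).
Hypotheses (oblY : output_oblivious Y) (computes : stably_computes X Y f).
Local Notation I := (init_config X).

Lemma output_le_of_reach n C : reach (I n) C -> C Y <= f n.
Proof. by move=> /computes [O [CO [_ <-]]]; apply: reach_output_mono. Qed.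

Lemma output_of_stable n C : reach (I n) C -> stable Y C -> C Y = f n.
Proof. by move=> /computes [O [CO [_ <-]]] /(_ O CO). Qed.

Lemma computed_superadditive : superadditive f.
Proof.
move=> a b; have [Oa [aOa [_ <-]]] := computes (reach_refl (I a)).
have [Ob [bOb [_ <-]]] := computes (reach_refl (I b)).
by apply: (@output_le_of_reach _ (vadd Oa Ob)); rewrite init_configD; apply: reach_vadd.
Qed.

Lemma stable_chain : exists O : nat -> config N,
  (forall n, reach (I n) (O n) /\ stable Y (O n)) /\
  (forall a d, reach (vadd (O a) (I d)) (O (a + d))).
Proof.
have next C : exists C', (exists n, reach (I n) C) ->
    reach (vadd C (I 1)) C' /\ stable Y C'.
  have [[n nC]|no_n] := classic (exists n, reach (I n) C); last by exists C => /no_n.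
  have : reach (I n.+1) (vadd C (I 1)) by rewrite -addn1 init_configD; apply: reach_vaddr.
  by move=> /computes [C' [? [? _]]]; exists C'.
have [g Hg] := choice _ next.
have [O0 [? [? _]]] := computes (reach_refl (I 0)).
pose O n := iter n g O0.
have O_ok n : reach (I n) (O n) /\ stable Y (O n).
  elim: n => [|n [nO _]]; first by [].
  have [reach_g stable_g] := Hg (O n) (ex_intro _ n nO).
  split=> //; apply: reach_trans reach_g.
  by rewrite -addn1 init_configD; apply: reach_vaddr.
exists O; split=> // a; elim=> [|d IH]; first by rewrite addn0 vadd_init0; apply: reach_refl.
have [reach_g _] := Hg (O (a + d)) (ex_intro _ _ (O_ok (a + d)).1).
rewrite addnS -addn1 init_configD vaddA; apply: reach_trans (reach_vaddr _ IH) reach_g.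
Qed.

Section Pumping.
Variable O : nat -> config N.
Hypothesis O_ok : forall n, reach (I n) (O n) /\ stable Y (O n).
Hypothesis O_chain : forall a d, reach (vadd (O a) (I d)) (O (a + d)).
Variable t : nat -> nat.
Hypothesis incr_t : {homo t : m n / m < n}.
Hypothesis O_const_or_incr : forall s, (forall k, O (t k) s = O (t 0) s) \/
  {homo (fun k => O (t k) s) : m n / m < n}.

Let x := t 0.
Let d := t 1 - t 0.
Let D s := O (t 1) s - O x s.

Lemma pump_gap_gt0 : 0 < d.
Proof. by rewrite subn_gt0 incr_t. Qed.

Lemma pump_step : O (t 1) = vadd (O x) D.
Proof.
apply: functional_extensionality => s; rewrite /vadd /D subnKC //.
by case: (O_const_or_incr s) => [-> | /(_ 0 1 isT) /ltnW].
Qed.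

Lemma pumped_reach k : reach (I (x + k * d)) (vadd (O x) (vscale k D)).
Proof.
rewrite init_configD init_configM; apply: reach_trans (reach_vaddr _ (O_ok x).1) _.
apply: reach_pump; rewrite -pump_step.
by have := O_chain x d; rewrite subnKC // ltnW ?incr_t.
Qed.

Lemma pumped_stable k : stable Y (vadd (O x) (vscale k D)).
Proof.
(* Each count in D is zero or unbounded along t, so a later O (t m) dominates. *)
apply: (@stable_le _ _ _ (O (t (k * \sum_s D s)))) => [s|]; last exact: (O_ok _).2.
rewrite /vadd /vscale; case: (O_const_or_incr s) => [const|incr].
  by rewrite /D (const 1) (const (k * _)) subnn muln0 addn0.
apply: leq_trans (incr_geq_addl _ incr); rewrite leq_add2l leq_mul2l.
by rewrite (bigD1 s) //= leq_addr orbT.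
Qed.

Lemma pumped_output k : f (x + k * d) = f x + k * D Y.
Proof.
rewrite -(output_of_stable (pumped_reach k) (@pumped_stable k)).
by rewrite -(output_of_stable (O_ok x).1 (O_ok x).2).
Qed.

Lemma pumped_increment m : x <= m -> f m + D Y <= f (m + d).
Proof.
move=> xm.
have [Q [CQ [_ QY]]] : exists Q, reach (vadd (O x) (I (m - x))) Q /\ stable Y Q /\ Q Y = f m.
  by apply: computes; rewrite -[in I m](subnKC xm) init_configD; apply: reach_vaddr; case: (O_ok x).
rewrite -QY; apply: (@output_le_of_reach _ (vadd Q D)).
have -> : m + d = t 1 + (m - x) by rewrite /d /x; have := incr_t (isT : 0 < 1); lia.
rewrite init_configD; apply: (reach_trans (reach_vaddr _ (O_ok _).1)).
by rewrite pump_step -vaddA [vadd D _]vaddC vaddA; apply: reach_vaddr.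
Qed.

End Pumping.

Lemma computed_eventually_quilt_affine : eventually_quilt_affine f.
Proof.
have [O [O_ok O_chain]] := stable_chain.
have [t [incr_t O_t]] := const_or_incr_subseq_fin O.
have [N0 HN0] := superadditive_eventually_exact_increment computed_superadditive
  (pump_gap_gt0 incr_t) (pumped_output O_ok O_chain incr_t O_t)
  (pumped_increment O_ok incr_t O_t).
by exists N0, (t 1 - t 0), (O (t 1) Y - O (t 0) Y); split; first exact: pump_gap_gt0.
Qed.

End ObliviousComputation.

(** * Semilinear functions *)

Lemma semilinear_set_ext (A B : nat -> Prop) :
  (forall x, A x <-> B x) -> semilinear_set A -> semilinear_set B.
Proof.
move=> AB; have -> // : A = B.
by apply: functional_extensionality => x; apply: propositional_extensionality.
Qed.

Lemma semilinear_set_ge c : semilinear_set (fun x => c <= x).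
Proof.
by apply: semilinear_set_ext (sl_thr 1 c%:Z) => x; rewrite mul1r lez_nat.
Qed.

Lemma semilinear_set_eq c : semilinear_set (fun x => x = c).
Proof.
apply: semilinear_set_ext (sl_inter (semilinear_set_ge c) (sl_thr (-1) (- c%:Z))) => x.
by rewrite mulN1r lerN2 lez_nat; split=> [[? ?]|->]; [apply/eqP; rewrite eqn_leq; apply/andP|].
Qed.

Lemma semilinear_set_mod P i : 0 < P -> semilinear_set (fun x => x = i %[mod P]).
Proof.
move=> P_gt0; apply: semilinear_set_ext (sl_mod 1 i%:Z P_gt0) => x.
by rewrite mul1r !modz_nat eqz_nat; split=> /eqP.
Qed.

Lemma eq_window_mod N P i j : N <= i < N + P -> N <= j < N + P ->
  i = j %[mod P] -> i = j.
Proof.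
move=> /andP[Ni iNP] /andP[Nj jNP].
rewrite -(subnKC Ni) -(subnKC Nj) => /eqP; rewrite eqn_modDl !modn_small; lia.
Qed.

Lemma window_mod_progression N P i x : N <= i < N + P -> N <= x ->
  x = i %[mod P] -> exists k, x = i + k * P.
Proof.
move=> iNP Nx xi; have P_gt0 : 0 < P by case/andP: iNP => *; lia.
have r_win : N <= N + (x - N) %% P < N + P by rewrite leq_addr ltn_add2l ltn_pmod.
have r_eq : N + (x - N) %% P = i.
  by apply: eq_window_mod r_win iNP _; rewrite modnDmr subnKC.
exists ((x - N) %/ P); rewrite -r_eq -addnA addnC [_ %% P + _]addnC -divn_eq.
by rewrite subnK.
Qed.

Lemma quilt_affine_semilinear f : eventually_quilt_affine f -> semilinear_fun f.
Proof.
move=> [N [P [q [P_gt0 fP]]]].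
(* Singletons below N, and the residue classes above N, each indexed by its
   representative in [N, N + P). *)
pose D (i : 'I_(N + P)) : nat -> Prop :=
  if i < N then fun x => x = i :> nat else fun x => N <= x /\ x = i %[mod P].
pose a (i : 'I_(N + P)) : rat := if i < N then 0%R else (q%:R / P%:R)%R.
pose b (i : 'I_(N + P)) : rat :=
  if i < N then (f i)%:R%R else ((f i)%:R - q%:R / P%:R * i%:R)%R.
exists (N + P), D, a, b; split; [|split; [|split]].
- move=> i; rewrite /D; case: ifP => _; first exact: semilinear_set_eq.
  exact: sl_inter (semilinear_set_ge N) (semilinear_set_mod _ P_gt0).
- move=> i j x /negP ij Dix Djx; apply: ij; apply/eqP/ord_inj; move: Dix Djx; rewrite /D.
  case: ifP => iN; case: ifP => jN /=; try by move=> + []; lia.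
  move=> [_ xi] [_ xj]; apply: (@eq_window_mod N P); rewrite -?xi -?xj //.
    by rewrite leqNgt iN ltn_ord.
  by rewrite leqNgt jN ltn_ord.
- move=> x; case: (ltnP x N) => [xN|Nx].
    by exists (Ordinal (ltn_addr P xN)); rewrite /D /= xN.
  have r_lt : N + (x - N) %% P < N + P by rewrite ltn_add2l ltn_pmod.
  exists (Ordinal r_lt); rewrite /D /= ltnNge leq_addr /=.
  by split=> //; rewrite modnDmr subnKC.
- move=> i x; rewrite /D /a /b; case: ifP => [_ ->|iN [Nx xi]]; first by rewrite mul0r add0r.
  have i_win : N <= i < N + P by rewrite leqNgt iN ltn_ord.
  have [k ->] := window_mod_progression i_win Nx xi.
  rewrite (quilt_affine_iter fP) ?natrD ?natrM; last by rewrite leqNgt iN.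
  have P_neq0 : (P%:R : rat) != 0%R by rewrite pnatr_eq0 -lt0n.
  by field.
Qed.

Definition eventually_periodic (A : nat -> Prop) N P :=
  0 < P /\ forall n, N <= n -> (A n <-> A (n + P)).

Lemma eventually_periodic_iter A N P : eventually_periodic A N P ->
  forall k n, N <= n -> (A n <-> A (n + k * P)).
Proof.
move=> [_ AP]; elim=> [|k IH] n Nn; first by rewrite mul0n addn0.
by rewrite mulSn [P + _]addnC addnA -AP -?IH //; lia.
Qed.

Lemma eventually_periodic_mul A N P N' k : eventually_periodic A N P ->
  N <= N' -> 0 < k -> eventually_periodic A N' (P * k).
Proof.
move=> AP NN' k_gt0; split; first by rewrite muln_gt0 AP.1.
by move=> n N'n; rewrite mulnC; apply: (eventually_periodic_iter AP); lia.
Qed.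

Lemma eventually_periodic_common A B NA PA NB PB :
  eventually_periodic A NA PA -> eventually_periodic B NB PB ->
  eventually_periodic A (maxn NA NB) (PA * PB) /\
  eventually_periodic B (maxn NA NB) (PA * PB).
Proof.
move=> AP BP; split; first exact: eventually_periodic_mul AP (leq_maxl _ _) BP.1.
by rewrite mulnC; apply: eventually_periodic_mul BP (leq_maxr _ _) AP.1.
Qed.

Lemma threshold_eventually_periodic (a b : int) :
  exists N P, eventually_periodic (fun x => (b <= a * x%:Z)%R) N P.
Proof.
exists (`|b| + 1), 1; split=> // n bn.
by case: (ltrgt0P a) => a0; [| |rewrite a0 !mul0r]; split; nia.
Qed.

Lemma semilinear_set_eventually_periodic A :
  semilinear_set A -> exists N P, eventually_periodic A N P.
Proof.
elim=> {A} [a b|a b c c_gt0|A _ [N [P [P_gt0 AP]]]|A B _ [NA [PA AP]] _ [NB [PB BP]]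
  |A B _ [NA [PA AP]] _ [NB [PB BP]]].
- exact: threshold_eventually_periodic.
- by exists 0, c; split=> // n _; rewrite PoszD mulrDr addrC modzMDl.
- by exists N, P; split=> // n /AP; tauto.
- have [[PAB_gt0 AP'] [_ BP']] := eventually_periodic_common AP BP.
  by exists (maxn NA NB), (PA * PB); split=> // n /[dup] /AP' + /BP'; tauto.
- have [[PAB_gt0 AP'] [_ BP']] := eventually_periodic_common AP BP.
  by exists (maxn NA NB), (PA * PB); split=> // n /[dup] /AP' + /BP'; tauto.
Qed.

Section SecondDifference.
Variables (f : nat -> nat) (N P : nat).
Hypotheses (sf : superadditive f) (P_gt0 : 0 < P).
Hypothesis f_second_diff : forall n, N <= n -> f (n + P + P) + f n = f (n + P) * 2.

Let delta n := f (n + P) - f n.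

Lemma delta_periodic k n : N <= n -> delta (n + k * P) = delta n.
Proof.
move=> Nn; elim: k => [|k IH]; first by rewrite mul0n addn0.
rewrite -IH /delta mulSn [P + _]addnC addnA.
have := @f_second_diff (n + k * P) (leq_trans Nn (leq_addr _ _)).
have := superadditive_homo sf (leq_addr P (n + k * P)).
have := superadditive_homo sf (leq_addr P (n + k * P + P)); lia.
Qed.

Lemma delta_progression k n : N <= n -> f (n + k * P) = f n + k * delta n.
Proof.
move=> Nn; elim: k => [|k IH]; first by rewrite !mul0n !addn0.
rewrite !mulSn [P + _]addnC addnA; have := delta_periodic k Nn; move: IH; rewrite /delta.
have := superadditive_homo sf (leq_addr P (n + k * P)); lia.
Qed.

Lemma delta_leq_addl n m : N <= m -> delta m <= delta (n + m).
Proof.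
move=> Nm; apply: (@affine_slope_leq (f n + f m) _ (f (n + m))) => k.
rewrite -addnA -!delta_progression ?(leq_trans Nm (leq_addl _ _)) //.
by rewrite -addnA sf.
Qed.

(* delta only grows under translation and is P-periodic: translating n to a
   multiple of P, and a multiple of P to n, shows all residues share a slope. *)
Lemma delta_const n : N <= n -> delta n = delta (N * P).
Proof.
have NNP : N <= N * P by rewrite leq_pmulr.
move=> Nn; apply/eqP; rewrite eqn_leq; apply/andP; split.
  have := delta_leq_addl (N * P + (P - 1) * n) Nn.
  by rewrite -addnA -{3}[n]mul1n -mulnDl subnK // [P * n]mulnC delta_periodic.
by have := delta_leq_addl n NNP; rewrite delta_periodic.
Qed.

Lemma second_difference_quilt_affine : eventually_quilt_affine f.
Proof.
exists N, P, (delta (N * P)); split=> // n Nn.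
by rewrite -(delta_const Nn) /delta subnKC // superadditive_homo ?leq_addr.
Qed.

End SecondDifference.

Lemma semilinear_superadditive_quilt_affine f :
  semilinear_fun f -> superadditive f -> eventually_quilt_affine f.
Proof.
move=> [n [D [a [b [D_sl [_ [D_cover f_affine]]]]]]] sf.
have /fin_all_exists [NP NP_ok] i :
    exists NP : nat * nat, eventually_periodic (D i) NP.1 NP.2.
  by have [N0 [P0 DP]] := semilinear_set_eventually_periodic (D_sl i); exists (N0, P0).
pose N := \max_i (NP i).1; pose P := \prod_i (NP i).2.
have D_per i : eventually_periodic (D i) N P.
  rewrite /P (bigD1 i) //=; apply: eventually_periodic_mul (NP_ok i) _ _.
    exact: leq_bigmax.
  by rewrite prodn_gt0 // => j; case: (NP_ok j).
have [i Di] := D_cover 0; have [P_gt0 _] := D_per i.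
apply: (@second_difference_quilt_affine f N P) => // m Nm.
have [j Djm] := D_cover m; have [_ DP] := D_per j.
have DjmP : D j (m + P) by rewrite -DP.
have DjmPP : D j (m + P + P) by rewrite -DP // (leq_trans Nm (leq_addr _ _)).
apply/eqP; rewrite -(eqr_nat rat) !natrD natrM.
by rewrite (f_affine _ _ Djm) (f_affine _ _ DjmP) (f_affine _ _ DjmPP) !natrD; apply/eqP; ring.
Qed.

(** * The construction *)

Lemma mem_In (T : eqType) (x : T) (s : seq T) : x \in s -> List.In x s.
Proof. by elim: s => //= y s IH; rewrite inE => /predU1P[->|/IH]; [left|right]. Qed.

Section Construction.
Variables (f : nat -> nat) (N0 P q : nat).
Hypotheses (P_gt0 : 0 < P) (sf : superadditive f).
Hypothesis f_period : forall n, N0 <= n -> f (n + P) = f n + q.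

(* Species A i, i < K, hold partial sums of inputs.  Sums past the window are
   folded back into [N1, K) by multiples of P, which by f_period shifts f by
   the same multiple of q.  N1 > 0 keeps index 1 inside the window. *)
Definition window_start := N0.+1.
Definition window_end := window_start + P.
Local Notation N1 := window_start.
Local Notation K := window_end.

Definition wrap n := if n < K then n else N1 + (n - N1) %% P.

Lemma wrap_lt n : wrap n < K.
Proof. by rewrite /wrap; case: ifP => // _; rewrite ltn_add2l ltn_pmod. Qed.

Lemma wrap_geq n : N1 <= n -> N1 <= wrap n.
Proof. by rewrite /wrap; case: ifP => // _; rewrite leq_addr. Qed.

Lemma wrap_spec n : exists t, [/\ n = wrap n + t * P, f n = f (wrap n) + t * q
  & t = 0 \/ N1 <= wrap n].
Proof.
rewrite /wrap; case: ifP => [_|nK]; first by exists 0; rewrite !addn0; split=> //; left.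
have n_eq : n = N1 + (n - N1) %% P + (n - N1) %/ P * P.
  by rewrite -addnA [_ %% P + _]addnC -divn_eq subnKC //; move: nK; rewrite /K; lia.
exists ((n - N1) %/ P); split=> //; last by right; rewrite leq_addr.
by rewrite {1}n_eq (quilt_affine_iter f_period) // (leq_trans (leqnSn N0) (leq_addr _ _)).
Qed.

Definition wrap_add (i j : 'I_K) : 'I_K := Ordinal (wrap_lt (i + j)).

Lemma one_lt_window_end : 1 < K.
Proof. by rewrite /K /N1 addSn ltnS addn_gt0 P_gt0 orbT. Qed.

Definition cspecies : finType := option (option 'I_K).
Definition sX : cspecies := None.
Definition sY : cspecies := Some None.
Definition sA (i : 'I_K) : cspecies := Some (Some i).

Lemma eq_sA i j : (sA i == sA j) = (i == j).
Proof. by apply/inj_eq => i1 j1 [<-]. Qed.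

Definition one_at (s : cspecies) : cspecies -> nat := fun s' => s' == s.

Definition one_idx : 'I_K := Ordinal one_lt_window_end.

Definition input_reaction :=
  (one_at sX, vadd (one_at (sA one_idx)) (vscale (f 1) (one_at sY))).

(* The subtraction does not truncate, f being superadditive. *)
Definition merge_reaction (i j : 'I_K) := (vadd (one_at (sA i)) (one_at (sA j)),
  vadd (one_at (sA (wrap_add i j))) (vscale (f (i + j) - f i - f j) (one_at sY))).

Definition construction : crn := Crn (input_reaction ::
  List.flat_map (fun i => List.map (merge_reaction i) (enum 'I_K)) (enum 'I_K)).

Lemma construction_reactionsP r : List.In r (reactions construction) <->
  r = input_reaction \/ exists i j, r = merge_reaction i j.
Proof.
split=> [[<-|/List.in_flat_map [i [_ /List.in_map_iff [j [<- _]]]]]|]; first by left.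
  by right; exists i, j.
case=> [->|[i [j ->]]]; [by left | right].
apply/List.in_flat_map; exists i; split; first by apply/mem_In; rewrite mem_enum.
by apply/List.in_map_iff; exists j; split=> //; apply/mem_In; rewrite mem_enum.
Qed.

Definition asum (w : 'I_K -> nat) (C : cspecies -> nat) := \sum_i C (sA i) * w i.

Lemma asumD w u v : asum w (vadd u v) = asum w u + asum w v.
Proof. by rewrite /asum -big_split; apply: eq_bigr => i _; rewrite mulnDl. Qed.

Lemma asumZ w k u : asum w (vscale k u) = k * asum w u.
Proof. by rewrite /asum big_distrr; apply: eq_bigr => i _; rewrite /vscale /= mulnA. Qed.

Lemma asum0 w C : (forall i, C (sA i) = 0) -> asum w C = 0.
Proof. by move=> C0; rewrite /asum big1 // => i _; rewrite C0. Qed.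

Lemma asum_single w (C : cspecies -> nat) k :
  (forall i, C (sA i) = (i == k)) -> asum w C = w k.
Proof.
move=> Ck; rewrite /asum (bigD1 k) //= Ck eqxx mul1n big1 ?addn0 // => i /negbTE ik.
by rewrite Ck ik.
Qed.

Lemma asum_one_atA w j : asum w (one_at (sA j)) = w j.
Proof. by apply: asum_single => i; rewrite /one_at eq_sA. Qed.

Lemma asum_one_atX w : asum w (one_at sX) = 0.
Proof. exact: asum0. Qed.

Lemma asum_one_atY w : asum w (one_at sY) = 0.
Proof. exact: asum0. Qed.

Definition asumE := (asumD, asumZ, asum_one_atA, asum_one_atX, asum_one_atY).

Lemma asum_balance w (C C' u v : cspecies -> nat) :
  (forall s, C' s + u s = C s + v s) -> asum w C' + asum w u = asum w C + asum w v.
Proof. by move=> bal; rewrite /asum -!big_split; apply: eq_bigr => i _; rewrite /= -!mulnDl bal. Qed.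

Lemma asum_le w (u v : cspecies -> nat) : (forall s, u s <= v s) -> asum w u <= asum w v.
Proof. by move=> uv; apply: leq_sum => i _; rewrite leq_mul2r uv orbT. Qed.

(* t counts the periods folded away so far; when t > 0 some molecule lies in the
   periodic part [N1, K) of the window, where it can absorb them. *)
Definition invariant x (C : cspecies -> nat) := exists t,
  [/\ x = C sX + asum (fun i => i) C + t * P, C sY = asum (fun i => f i) C + t * q
    & t = 0 \/ exists2 i : 'I_K, N1 <= i & 0 < C (sA i)].

Lemma input_invariant x (C C' : cspecies -> nat) :
  (forall s, C' s + input_reaction.1 s = C s + input_reaction.2 s) ->
  invariant x C -> invariant x C'.
Proof.
move=> bal [t [x_eq Y_eq tcl]]; exists t.
have := bal sX; have := bal sY; rewrite /= /one_at /vadd /vscale /= => balY balX.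
have := asum_balance (fun i => i) bal; have := asum_balance (fun i => f i) bal.
rewrite !asumE /= => balF balI.
split; [lia | lia | case: tcl => [|[l Nl Cl]]; [left | right; exists l]] => //.
by have := bal (sA l); rewrite /= /one_at /vadd /vscale /=; lia.
Qed.

Lemma merge_invariant x i j (C C' : cspecies -> nat) :
  (forall s, (merge_reaction i j).1 s <= C s) ->
  (forall s, C' s + (merge_reaction i j).1 s = C s + (merge_reaction i j).2 s) ->
  invariant x C -> invariant x C'.
Proof.
move=> r_le bal [t [x_eq Y_eq tcl]].
have [t' [ij_eq f_ij wrap_cl]] := wrap_spec (i + j).
have fij := sf i j.
exists (t + t'); rewrite mulnDl.
have := bal sX; have := bal sY; rewrite /= /one_at /vadd /vscale /= => balY balX.
have := asum_balance (fun i => i) bal; have := asum_balance (fun i => f i) bal.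
rewrite !asumE /= => balF balI.
split; [lia | lia | ].
have C'_ge s : (merge_reaction i j).2 s <= C' s by have := r_le s; have := bal s; lia.
have [Nk|kN] := boolP (N1 <= wrap (i + j)).
  right; exists (wrap_add i j) => //; apply: leq_trans (C'_ge _).
  by rewrite /= /one_at /vadd eqxx.
have -> : t' = 0 by case: wrap_cl kN => // ->.
rewrite addn0; case: tcl => [|[l Nl Cl]]; [by left | right; exists l => //].
have [li lj] : l != i /\ l != j.
  by split; apply: contraNneq kN => <-; apply: wrap_geq; rewrite (leq_trans Nl) ?leq_addr ?leq_addl.
by have := bal (sA l); rewrite /= /one_at /vadd /vscale /= !eq_sA (negbTE li) (negbTE lj); lia.
Qed.

Lemma step_invariant x (C C' : config construction) :
  step C C' -> invariant x C -> invariant x C'.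
Proof.
move=> /step_balance [r [/construction_reactionsP r_cases r_le bal]].
by case: r_cases r_le bal => [|[i [j]]] -> r_le bal; [apply: input_invariant | apply: merge_invariant].
Qed.

Lemma reach_invariant x (C C' : config construction) :
  reach C C' -> invariant x C -> invariant x C'.
Proof. by elim=> // C1 C2 C3 /step_invariant inv12 _ IH /inv12. Qed.

Lemma init_invariant x : invariant x (@init_config construction sX x).
Proof.
have A0 w : asum w (@init_config construction sX x) = 0 by apply: asum0.
by exists 0; rewrite !A0 /init_config /= !addn0; split=> //; left.
Qed.

Definition count (C : cspecies -> nat) := asum (fun _ => 1) C.

Lemma leq_count (C : cspecies -> nat) l : C (sA l) <= count C.
Proof. by rewrite /count /asum (bigD1 l) //= muln1 leq_addr. Qed.

Lemma count_ge2_merge (C : cspecies -> nat) : 1 < count C ->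
  exists i j, forall s, (merge_reaction i j).1 s <= C s.
Proof.
move=> c2; have [i Ci|C0] := pickP (fun i => 0 < C (sA i)); last first.
  by move: c2; rewrite /count asum0 // => i; move/negbT: (C0 i); rewrite lt0n negbK => /eqP.
case: (ltnP 1 (C (sA i))) => [Ci2|Ci1].
  by exists i, i => s; rewrite /= /one_at /vadd; case: eqP => [->|] /=; lia.
have [j /andP[ji Cj]|Cnone] := pickP (fun j => (j != i) && (0 < C (sA j))).
  exists i, j => s; rewrite /= /one_at /vadd.
  case: (eqVneq s (sA i)) => [->|si]; first by rewrite eq_sA eq_sym (negbTE ji) /=; lia.
  by case: eqP => [->|] /=; lia.
suff : count C = 1 by lia.
rewrite /count (asum_single _ (k := i)) // => l; case: (eqVneq l i) => [->|li] /=; first by lia.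
by move/negbT: (Cnone l); rewrite li /= lt0n negbK => /eqP.
Qed.

Lemma reach_terminal_config (C : config construction) :
  exists2 O, reach C O & O sX = 0 /\ count O <= 1.
Proof.
pose mu (C : cspecies -> nat) := 2 * C sX + count C.
move: C; apply: (@reach_terminal construction (fun O => O sX = 0 /\ count O <= 1) mu).
move=> C nT.
have fire r : List.In r (reactions construction) -> (forall s, r.1 s <= C s) ->
    mu r.2 < mu r.1 -> exists2 C', step C C' & mu C' < mu C.
  move=> r_in r_le r_dec; have [C' CC' bal] := @step_fire construction _ _ r_in r_le.
  exists C' => //; have := asum_balance (fun _ => 1) bal; have := bal sX.
  by move: r_dec; rewrite /mu /count; lia.
have [X0|X_gt0] := posnP (C sX).
  have [i [j r_le]] : exists i j, forall s, (merge_reaction i j).1 s <= C s.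
    by apply: count_ge2_merge; rewrite ltnNge; apply/negP => c1; apply: nT.
  apply: fire r_le _; first by apply/construction_reactionsP; right; exists i, j.
  by rewrite /mu /count !asumE /= /one_at /vadd /vscale /=; lia.
apply: (fire input_reaction); first by apply/construction_reactionsP; left.
  by move=> s; rewrite /= /one_at; case: eqP => [->|] /=; lia.
by rewrite /mu /count !asumE /= /one_at /vadd /vscale /=; lia.
Qed.

Lemma terminal_no_step (C C' : config construction) :
  C sX = 0 -> count C <= 1 -> ~ step C C'.
Proof.
move=> X0 c1 /step_balance [r [/construction_reactionsP [|[i [j]]] -> r_le _]].
  by have := r_le sX; rewrite /= /one_at eqxx X0.
by have := asum_le (fun _ => 1) r_le; rewrite /= !asumE; move: c1; rewrite /count; lia.
Qed.

Lemma terminal_output x (C : cspecies -> nat) :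
  invariant x C -> C sX = 0 -> count C <= 1 -> C sY = f x.
Proof.
move=> [t [x_eq Y_eq tcl]] X0; rewrite X0 add0n in x_eq.
rewrite leq_eqVlt ltnS leqn0 => /orP[/eqP c1|/eqP c0]; last first.
  have C0 l : C (sA l) = 0 by have := leq_count C l; rewrite c0 leqn0 => /eqP.
  rewrite !asum0 // in x_eq Y_eq.
  have t0 : t = 0 by case: tcl => // [[l _]]; rewrite C0.
  by rewrite Y_eq x_eq t0 !mul0n (superadditive0 sf).
have /sum_nat_eq1 [k [_ Ck1 Ck0]] : \sum_i C (sA i) == 1.
  by move: c1; rewrite /count /asum; under eq_bigr do rewrite muln1; move=> ->.
have Ck l : C (sA l) = (l == k).
  by case: (eqVneq l k) => [->|lk] //; exact: Ck0.
rewrite !(asum_single _ Ck) in x_eq Y_eq; rewrite Y_eq x_eq.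
case: tcl => [->|[l Nl]]; first by rewrite !mul0n !addn0.
rewrite Ck lt0n eqb0 negbK => /eqP lk; subst l.
rewrite (quilt_affine_iter f_period) //; exact: leq_trans (leqnSn N0) Nl.
Qed.

Lemma construction_obliviously_computes : obliviously_computable f.
Proof.
exists construction, sX, sY; split; first by move=> r /construction_reactionsP [|[i [j]]] ->.
move=> x C xC; have [O CO [O_X O_count]] := reach_terminal_config C.
exists O; split=> //; split; first by apply: stable_of_no_step => C'; apply: terminal_no_step.
by apply: terminal_output O_X O_count; apply: reach_invariant (reach_trans xC CO) (init_invariant x).
Qed.

End Construction.

Theorem theorem39 (f : nat -> nat) :
  obliviously_computable f <-> semilinear_fun f /\ superadditive f.
Proof.
split=> [[N [X [Y [oblY computes]]]]|[sl_f sf]].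
  split; last exact: computed_superadditive computes.
  exact/quilt_affine_semilinear/(computed_eventually_quilt_affine oblY computes).
have [N0 [P [q [P_gt0 fP]]]] := semilinear_superadditive_quilt_affine sl_f sf.
exact: construction_obliviously_computes P_gt0 sf fP.
Qed.
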